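(* Let $G=(V,E)$ be a $2$-edge-strongly biconnected directed graph. Then the directed graph output by Algorithm A (described in the context) on input $G$ is $2$-edge-strongly biconnected.
   Context: A directed graph is strongly biconnected if it is strongly connected and its underlying undirected graph (ignoring edge directions) is biconnected. A strongly biconnected component of a directed graph is a maximal strongly biconnected subgraph. A strongly biconnected directed graph $G=(V,E)$ is $2$-edge-strongly biconnected if it has at least three vertices and $(V,E\setminus\{e\})$ is strongly biconnected for every $e\in E$. For a directed graph $D=(V,F)$, an edge $e\in F$ is a b-bridge if $(V,F\setminus\{e\})$ is not strongly biconnected. A directed graph is $2$-edge-connected if it is strongly connected and remains strongly connected after deleting any single edge. Algorithm A, on input a $2$-edge-strongly biconnected directed graph $G=(V,E)$: (1) Choose $U\subseteq E$ such that $H=(V,U)$ is a minimal $2$-edge-connected spanning subgraph of $G$ (i.e. $H$ is $2$-edge-connected and deleting any edge of $U$ destroys $2$-edge-connectivity). (2) If $H$ is $2$-edge-strongly biconnected, output $H$ and stop. (3) Otherwise set $E_{2e}:=U$. While the underlying undirected graph of $(V,E_{2e})$ is not biconnected: compute the strongly biconnected components of $(V,E_{2e})$, find an edge $(v,w)\in E\setminus E_{2e}$ such that $v,w$ are not in the same strongly biconnected component of $(V,E_{2e})$, and add $(v,w)$ to $E_{2e}$. (4) Compute the set of b-bridges of $(V,E_{2e})$. For each such b-bridge $t$: while the underlying undirected graph of $(V,E_{2e}\setminus\{t\})$ is not biconnected, compute the strongly biconnected components of $(V,E_{2e}\setminus\{t\})$, find an edge $(u,w)\in E\setminus E_{2e}$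 such that $u,w$ are not in the same strongly biconnected component of $(V,E_{2e}\setminus\{t\})$, and add $(u,w)$ to $E_{2e}$. (5) Output $(V,E_{2e})$. *)

From mathcomp Require Import all_boot.
Set Implicit Arguments. Unset Strict Implicit. Unset Printing Implicit Defensive.

Section Graphs.
Variable T : finType.
Implicit Types (S : {set T}) (F : {set T * T}).

Definition drel S F : rel T :=
  fun x y => [&& x \in S, y \in S & (x, y) \in F].
Definition urel S F : rel T :=
  fun x y => drel S F x y || drel S F y x.

Definition strongly_connected S F : Prop :=
  forall x y, x \in S -> y \in S -> connect (drel S F) x y.

Definition und_connected S F : Prop :=
  forall x y, x \in S -> y \in S -> connect (urel S F) x y.

Definition und_biconnected S F : Prop :=
  und_connected S F /\ forall v, v \in S -> und_connected (S :\ v) F.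

Definition strongly_biconnected S F : Prop :=
  strongly_connected S F /\ und_biconnected S F.

Definition subgraph S' F' S F : Prop :=
  S' \subset S /\ F' \subset F /\
  forall x y, (x, y) \in F' -> x \in S' /\ y \in S'.

Definition sbc S' F' S F : Prop :=
  subgraph S' F' S F /\ strongly_biconnected S' F' /\
  forall S'' F'', subgraph S'' F'' S F -> strongly_biconnected S'' F'' ->
    S' \subset S'' -> F' \subset F'' -> S'' = S' /\ F'' = F'.

Definition same_sbc F v w : Prop :=
  exists S' F', sbc S' F' [set: T] F /\ v \in S' /\ w \in S'.

Definition two_edge_connected F : Prop :=
  strongly_connected [set: T] F /\
  forall e, e \in F -> strongly_connected [set: T] (F :\ e).

Definition two_edge_strongly_biconnected F : Prop :=
  strongly_biconnected [set: T] F /\ 3 <= #|T| /\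
  forall e, e \in F -> strongly_biconnected [set: T] (F :\ e).

Definition b_bridge F e : Prop :=
  e \in F /\ ~ strongly_biconnected [set: T] (F :\ e).

Definition min_2ec_spanning (E U : {set T * T}) : Prop :=
  U \subset E /\ two_edge_connected U /\
  forall e, e \in U -> ~ two_edge_connected (U :\ e).

Inductive state :=
  | Init
  | Phase3 of {set T * T}                  (* current E_2e, step (3) loop *)
  | Phase4 of {set T * T} & seq (T * T)    (* current E_2e, b-bridges still to process *)
  | Done of {set T * T}.

Inductive stepA (E : {set T * T}) : state -> state -> Prop :=
  | st_init_done (U : {set T * T}) :
      min_2ec_spanning E U -> two_edge_strongly_biconnected U ->
      stepA E Init (Done U)
  | st_init_3 (U : {set T * T}) :
      min_2ec_spanning E U -> ~ two_edge_strongly_biconnected U ->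
      stepA E Init (Phase3 U)
  | st_3_add (F : {set T * T}) (v w : T) :
      ~ und_biconnected [set: T] F ->
      (v, w) \in E -> (v, w) \notin F -> ~ same_sbc F v w ->
      stepA E (Phase3 F) (Phase3 ((v, w) |: F))
  | st_3_4 (F : {set T * T}) (s : seq (T * T)) :
      und_biconnected [set: T] F ->
      uniq s -> (forall e, e \in s <-> b_bridge F e) ->
      stepA E (Phase3 F) (Phase4 F s)
  | st_4_add (F : {set T * T}) (t : T * T) (s : seq (T * T)) (u w : T) :
      ~ und_biconnected [set: T] (F :\ t) ->
      (u, w) \in E -> (u, w) \notin F -> ~ same_sbc (F :\ t) u w ->
      stepA E (Phase4 F (t :: s)) (Phase4 ((u, w) |: F) (t :: s))
  | st_4_next (F : {set T * T}) (t : T * T) (s : seq (T * T)) :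
      und_biconnected [set: T] (F :\ t) ->
      stepA E (Phase4 F (t :: s)) (Phase4 F s)
  | st_4_done (F : {set T * T}) :
      stepA E (Phase4 F [::]) (Done F).

Inductive reachableA (E : {set T * T}) : state -> Prop :=
  | reach_init : reachableA E Init
  | reach_step (s s' : state) : reachableA E s -> stepA E s s' -> reachableA E s'.

End Graphs.

From mathcomp Require Import all_boot.
From Stdlib Require Import Classical ClassicalEpsilon.

Set Implicit Arguments. Unset Strict Implicit. Unset Printing Implicit Defensive.

(** Every connectivity property involved is monotone in the edge set, so
   adding edges never destroys what has been achieved: the current graph
   stays 2-edge-connected, and a b-bridge that has been processed stays a
   non-b-bridge. Hence it suffices that the algorithm never gets stuck, and
   the only non-trivial case is finding an edge to add. If (V, F) is not
   biconnected (possibly after removing a vertex x), two vertices a, b are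
   disconnected in it, while they are connected in the biconnected (V, E) (or
   (V, E \ t)). A path from a to b in E leaves the component of a through an
   edge whose endpoints are disconnected in F (minus x); a strongly
   biconnected component containing both endpoints would connect them, even
   after removing x, so this edge is a legal choice. *)

Section Connectivity.
Variable T : finType.
Implicit Types (S : {set T}) (F : {set T * T}).

Lemma connect_subrel (r1 r2 : rel T) :
  subrel r1 r2 -> subrel (connect r1) (connect r2).
Proof. by move=> sr; apply: connect_sub => x y /sr; apply: connect1. Qed.

Lemma drel_subset S1 S2 F1 F2 : S1 \subset S2 -> F1 \subset F2 ->
  subrel (drel S1 F1) (drel S2 F2).
Proof.
move=> sS sF x y /and3P [xS yS xyF].
by rewrite /drel (subsetP sS x xS) (subsetP sS y yS) (subsetP sF _ xyF).
Qed.

Lemma urel_subset S1 S2 F1 F2 : S1 \subset S2 -> F1 \subset F2 ->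
  subrel (urel S1 F1) (urel S2 F2).
Proof.
by move=> sS sF x y /orP [] /(drel_subset sS sF) h; rewrite /urel h ?orbT.
Qed.

Lemma urel_sym S F : symmetric (urel S F).
Proof. by move=> x y; rewrite /urel orbC. Qed.

Lemma connect_urel_edge S F v w :
  v \in S -> w \in S -> (v, w) \in F -> connect (urel S F) v w.
Proof. by move=> vS wS vwF; apply: connect1; rewrite /urel /drel vS wS vwF. Qed.

Lemma und_connectedP S F :
  reflect (und_connected S F)
          [forall x in S, forall y in S, connect (urel S F) x y].
Proof.
apply: (iffP forall_inP) => [h x y xS | h x xS]; first exact/forall_inP/h.
by apply/forall_inP => y; apply: h.
Qed.

Section EdgeMonotonicity.
Variables F1 F2 : {set T * T}.
Hypothesis sF12 : F1 \subset F2.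

Lemma strongly_connected_subset S :
  strongly_connected S F1 -> strongly_connected S F2.
Proof.
by move=> sc x y xS yS; apply: connect_subrel (sc x y xS yS); apply: drel_subset.
Qed.

Lemma und_connected_subset S :
  und_connected S F1 -> und_connected S F2.
Proof.
by move=> uc x y xS yS; apply: connect_subrel (uc x y xS yS); apply: urel_subset.
Qed.

Lemma strongly_biconnected_subset S :
  strongly_biconnected S F1 -> strongly_biconnected S F2.
Proof.
move=> [sc [uc ub]]; split; first exact: strongly_connected_subset.
split=> [|v vS]; [exact: und_connected_subset | exact/und_connected_subset/ub].
Qed.

End EdgeMonotonicity.

Lemma two_edge_connected_subset F1 F2 :
  F1 \subset F2 -> two_edge_connected F1 -> two_edge_connected F2.
Proof.
move=> sF [sc scD1]; split=> [|e _]; first exact: strongly_connected_subset sc.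
have [eF1 | eF1] := boolP (e \in F1).
  exact/(strongly_connected_subset (setSD _ sF))/scD1.
by apply: strongly_connected_subset sc; rewrite subsetD1 sF eF1.
Qed.

Lemma two_edge_strongly_biconnected_setD1 F e :
  two_edge_strongly_biconnected F -> strongly_biconnected [set: T] (F :\ e).
Proof.
move=> [sbF [_ sbD1]]; have [eF | eF] := boolP (e \in F); first exact: sbD1.
by apply: strongly_biconnected_subset sbF; rewrite subsetD1 subxx eF.
Qed.

Lemma two_edge_strongly_biconnected_2ec F :
  two_edge_strongly_biconnected F -> two_edge_connected F.
Proof. by move=> [[sc _] [_ sbD1]]; split=> // e /sbD1 []. Qed.

Lemma connect_exit_edge (r r' : rel T) a b :
  connect r a b -> ~~ connect r' a b ->
  exists x y, [/\ r x y, connect r' a x & ~~ connect r' a y].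
Proof.
suff exit_path p x :
    path r x p -> connect r' a x -> ~~ connect r' a (last x p) ->
    exists x y, [/\ r x y, connect r' a x & ~~ connect r' a y].
  by move=> /connectP [p rp ->]; apply: exit_path rp (connect0 _ _).
elim: p x => [|y p IHp] x /=; first by move=> _ ->.
move=> /andP [rxy rp] ax.
have [ay | nay] := boolP (connect r' a y); first exact: IHp.
by move=> _; exists x, y.
Qed.

Lemma exists_edge_across_components S F F' :
  und_connected S F' -> ~ und_connected S F ->
  exists v w, [/\ v \in S, w \in S, (v, w) \in F', (v, w) \notin F &
                  ~~ connect (urel S F) v w].
Proof.
move=> ucF' /und_connectedP /forall_inPn [a aS /forall_inPn [b bS nab]].
have [x [y [F'xy ax nay]]] := connect_exit_edge (ucF' a b aS bS) nab.
have nxy : ~~ connect (urel S F) x y by apply: contra nay; apply: connect_trans.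
have nyx : ~~ connect (urel S F) y x.
  by rewrite (sym_connect_sym (urel_sym S F)).
have notF v w :
    v \in S -> w \in S -> ~~ connect (urel S F) v w -> (v, w) \notin F.
  by move=> vS wS; apply: contra; apply: connect_urel_edge.
case/orP: F'xy => /and3P [xS yS F'e]; [exists x, y | exists y, x].
  by split=> //; apply: notF.
by split=> //; apply: notF.
Qed.

Lemma same_sbc_connect F v w :
  same_sbc F v w -> connect (urel [set: T] F) v w.
Proof.
move=> [S' [F' [[[_ [sF' _]] [[_ [ucF' _]] _]] [vS' wS']]]].
exact: connect_subrel (urel_subset (subsetT S') sF') _ _ (ucF' v w vS' wS').
Qed.

Lemma same_sbc_connectD1 F x v w : v != x -> w != x ->
  same_sbc F v w -> connect (urel ([set: T] :\ x) F) v w.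
Proof.
move=> vx wx [S' [F' [[[_ [sF' _]] [[_ [ucF' ubF']] _]] [vS' wS']]]].
have [xS' | xS'] := boolP (x \in S').
  apply: connect_subrel (urel_subset (setSD _ (subsetT S')) sF') _ _ _.
  by apply: ubF'; rewrite // !inE ?vx ?wx.
apply: connect_subrel (urel_subset _ sF') _ _ (ucF' v w vS' wS').
by rewrite subsetD1 subsetT xS'.
Qed.

Lemma exists_edge_across_sbc F F' :
  und_biconnected [set: T] F' -> ~ und_biconnected [set: T] F ->
  exists v w, [/\ (v, w) \in F', (v, w) \notin F & ~ same_sbc F v w].
Proof.
move=> [ucF' ubF'] nbF; have [ucF | nucF] := classic (und_connected [set: T] F).
  have [x nucFx] : exists x, ~ und_connected ([set: T] :\ x) F.
    apply: NNPP => nx; apply: nbF; split=> // x _.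
    by apply: NNPP => nucFx; apply: nx; exists x.
  have [v [w [vS wS F'vw nFvw nvw]]] :=
    exists_edge_across_components (ubF' x (in_setT x)) nucFx.
  rewrite !inE !andbT in vS wS.
  by exists v, w; split=> // /(same_sbc_connectD1 vS wS); apply/negP.
have [v [w [_ _ F'vw nFvw nvw]]] := exists_edge_across_components ucF' nucF.
by exists v, w; split=> // /same_sbc_connect; apply/negP.
Qed.

End Connectivity.

Lemma exists_minimal_subset (A : finType) (P : {set A} -> Prop) (U0 : {set A}) :
  P U0 ->
  exists2 U : {set A}, U \subset U0 & P U /\ forall e, e \in U -> ~ P (U :\ e).
Proof.
have [k] := ubnP #|U0|; elim: k U0 => // k IHk U0 ltU0k PU0.
have [[e [eU0 PU0e]] | minU0] := classic (exists e, e \in U0 /\ P (U0 :\ e)).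
  have [|U sU minU] := IHk (U0 :\ e) _ PU0e.
    by rewrite (cardsD1 e U0) eU0 add1n ltnS in ltU0k.
  by exists U => //; apply: subset_trans sU (subD1set _ _).
by exists U0 => //; split=> // e eU0 PU0e; apply: minU0; exists e.
Qed.

Lemma exists_uniq_enum (A : finType) (P : A -> Prop) :
  exists s : seq A, uniq s /\ forall x, x \in s <-> P x.
Proof.
exists (enum [pred x | is_left (excluded_middle_informative (P x))]).
split=> [|x]; first exact: enum_uniq.
by rewrite mem_enum inE; case: excluded_middle_informative.
Qed.

Section AlgorithmA.
Variables (T : finType) (E : {set T * T}).
Hypothesis tesbE : two_edge_strongly_biconnected E.

Definition algA_inv (st : state T) : Prop :=
  match st with
  | Init => True
  | Phase3 F => F \subset E /\ two_edge_connected F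
  | Phase4 F s => [/\ F \subset E, two_edge_connected F,
    strongly_biconnected [set: T] F &
    forall e, e \in F -> e \notin s -> strongly_biconnected [set: T] (F :\ e)]
  | Done H => two_edge_strongly_biconnected H
  end.

Lemma algA_inv_step st st' : algA_inv st -> stepA E st st' -> algA_inv st'.
Proof.
move=> + st_st'; case: st_st' => //=.
- by move=> U [sUE [ecU _]].
- move=> F v w _ vwE _ _ [sFE ecF]; rewrite subUset sub1set vwE.
  by split=> //; apply: two_edge_connected_subset ecF; apply: subsetUr.
- move=> F s ubF _ bridges [sFE ecF]; split=> //; first by split; [case: ecF|].
  by move=> e eF /negP es; apply: NNPP => nsb; apply/es/bridges.
- move=> F t s u w _ uwE uwF _ [sFE ecF sbF sbD1].
  have sFF' := subsetUr [set (u, w)] F.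
  split; first by rewrite subUset sub1set uwE.
  + exact: two_edge_connected_subset ecF.
  + exact: strongly_biconnected_subset sbF.
  move=> e; rewrite in_setU1 => /predU1P [-> _|eF es]; first by rewrite setU1K.
  by apply: strongly_biconnected_subset (sbD1 e eF es); apply: setSD.
- move=> F t s ubFt [sFE ecF sbF sbD1]; split=> // e eF es.
  have [et | net] := eqVneq e t.
    by rewrite -et in ubFt *; split=> //; apply: ecF.2.
  by apply: sbD1; rewrite // inE negb_or net.
- move=> F [_ _ sbF sbD1]; split=> //; split=> [|e eF]; last exact: sbD1.
  by case: tesbE => _ [].
Qed.

Lemma reachableA_inv st : reachableA E st -> algA_inv st.
Proof. by elim=> // st1 st2 _; apply: algA_inv_step. Qed.

Lemma stepA_from_Init : exists st', stepA E (Init T) st'.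
Proof.
have [U sUE [ecU minU]] :=
  exists_minimal_subset (two_edge_strongly_biconnected_2ec tesbE).
have minUE : min_2ec_spanning E U by [].
have [tesbU | ntesbU] := classic (two_edge_strongly_biconnected U).
  by exists (Done U); apply: st_init_done.
by exists (Phase3 U); apply: st_init_3.
Qed.

Lemma stepA_from_Phase3 F : exists st', stepA E (Phase3 F) st'.
Proof.
have [ubF | nubF] := classic (und_biconnected [set: T] F).
  have [s [uniq_s bridges]] := exists_uniq_enum (b_bridge F).
  by exists (Phase4 F s); apply: st_3_4.
have [v [w [vwE vwF nvw]]] := exists_edge_across_sbc (tesbE.1.2) nubF.
by exists (Phase3 ((v, w) |: F)); apply: st_3_add.
Qed.

Lemma stepA_from_Phase4 F t s : exists st', stepA E (Phase4 F (t :: s)) st'.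
Proof.
have [ubFt | nubFt] := classic (und_biconnected [set: T] (F :\ t)).
  by exists (Phase4 F s); apply: st_4_next.
have ubEt := (two_edge_strongly_biconnected_setD1 t tesbE).2.
have [u [w [uwEt uwFt nuw]]] := exists_edge_across_sbc ubEt nubFt.
move: uwEt uwFt; rewrite !inE => /andP [uwt uwE]; rewrite uwt /= => uwF.
by exists (Phase4 ((u, w) |: F) (t :: s)); apply: st_4_add.
Qed.

End AlgorithmA.

Theorem mainTheorem2 (T : finType) (E : {set T * T}) :
  two_edge_strongly_biconnected E ->
  forall st : state T, reachableA E st ->
    (exists H, st = Done H /\ two_edge_strongly_biconnected H) \/
    (exists st', stepA E st st').
Proof.
move=> tesbE st /(reachableA_inv tesbE).
case: st => [_ | F _ | F [|t s] _ | H tesbH].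
- by right; apply: stepA_from_Init.
- by right; apply: stepA_from_Phase3.
- by right; exists (Done F); apply: st_4_done.
- by right; apply: stepA_from_Phase4.
- by left; exists H.
Qed.
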